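(* For a permutation $\pi$ of $[k]$ and $y\in\mathcal{Y}$ let $P_{\pi,y}=\mathrm{conv}\{\mathbbm{1}_{\pi,i}\odot y: i\in\{0,\dots,k\}\}$. Then (i) $\bigcup_{y\in\mathcal{Y},\pi}P_{\pi,y}=[-1,1]^k$; and (ii) for all $f\in\mathcal{F}_k$, all $y,y'\in\mathcal{Y}$ and all permutations $\pi$, the function $L^f(\cdot,y')$ is affine on $P_{\pi,y}$.
   Context: $[k]=\{1,\dots,k\}$, $\mathcal{Y}=\{-1,1\}^k$; $u\odot u'$ entrywise product, $\mathbbm{1}$ all-ones, $(x)_+$ entrywise positive part. $\mathbbm{1}_{\pi,i}$ is the $0/1$ indicator vector of $\{\pi_1,\dots,\pi_i\}$, with $\mathbbm{1}_{\pi,0}=0$. $\mathcal{F}_k$: set functions $f:2^{[k]}\to\mathbb{R}$ that are submodular, increasing and normalized. Lovász extension $F(x)=\max_\pi\sum_{i=1}^kx_{\pi_i}(f(\{\pi_1,..,\pi_i\})-f(\{\pi_1,..,\pi_{i-1}\}))$ for $x\in\mathbb{R}^k_+$; Lovász hinge $L^f(u,y)=F((\mathbbm{1}-u\odot y)_+)$. *)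

From HB Require Import structures.
From mathcomp Require Import all_boot all_order all_algebra fingroup perm.
Set Implicit Arguments. Unset Strict Implicit. Unset Printing Implicit Defensive.
Import Order.TTheory GRing.Theory Num.Theory.
Local Open Scope ring_scope.

Section Defs.
Variables (R : realFieldType) (k : nat).

Definition is_sign (y : 'I_k -> R) : Prop := forall j, y j = 1 \/ y j = -1.

(* {pi_1, ..., pi_i} (0-based: positions l < i) *)
Definition prefix (pi : {perm 'I_k}) (i : nat) : {set 'I_k} :=
  [set pi l | l : 'I_k & (l < i)%N].

Definition ind (pi : {perm 'I_k}) (i : nat) : 'I_k -> R :=
  fun j => if j \in prefix pi i then 1 else 0.

Definition Ppy (pi : {perm 'I_k}) (y : 'I_k -> R) (u : 'I_k -> R) : Prop :=
  exists lam : 'I_k.+1 -> R,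
    (forall i, 0 <= lam i) /\ \sum_(i < k.+1) lam i = 1 /\
    forall j, u j = \sum_(i < k.+1) lam i * (ind pi i j * y j).

Definition submodular (f : {set 'I_k} -> R) : Prop :=
  forall A B : {set 'I_k}, f (A :|: B) + f (A :&: B) <= f A + f B.
Definition increasing (f : {set 'I_k} -> R) : Prop :=
  forall A B : {set 'I_k}, A \subset B -> f A <= f B.
Definition normalized (f : {set 'I_k} -> R) : Prop := f set0 = 0.
Definition in_Fk f := [/\ submodular f, increasing f & normalized f].

Definition lov_sum (f : {set 'I_k} -> R) (x : 'I_k -> R) (pi : {perm 'I_k}) : R :=
  \sum_(i < k) x (pi i) * (f (prefix pi i.+1) - f (prefix pi i)).

Definition lovasz (f : {set 'I_k} -> R) (x : 'I_k -> R) : R :=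
  \big[Num.max/lov_sum f x 1%g]_(pi : {perm 'I_k}) lov_sum f x pi.

Definition lhinge (f : {set 'I_k} -> R) (u y : 'I_k -> R) : R :=
  lovasz f (fun j => Num.max 0 (1 - u j * y j)).

Definition affine_on (g : ('I_k -> R) -> R) (P : ('I_k -> R) -> Prop) : Prop :=
  exists (a : 'I_k -> R) (b : R), forall u, P u -> g u = \sum_(j < k) a j * u j + b.

End Defs.

From Pilot Require Import Defs.
From HB Require Import structures.
From mathcomp Require Import all_boot all_order all_algebra fingroup perm.
From mathcomp Require Import ring lra zify.
Import Order.TTheory GRing.Theory Num.Theory.
Local Open Scope ring_scope.
Set Implicit Arguments. Unset Strict Implicit. Unset Printing Implicit Defensive.

(* (i) For u in the cube put y = sign u; the vector |u| = u .* y, sorted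
   decreasingly by s, is the convex combination of the indicators 1_{s,i} whose
   weights are the successive differences of its sorted entries.
   (ii) On P_{pi,y} we have u = t .* y with t a convex combination of the
   1_{pi,i}, so t lies in [0,1]^k and is nonincreasing along pi.  Hence
   (1 - u .* y')_+ = 1 - t .* (y .* y'), and one permutation s, depending only on
   pi and y .* y', sorts all these vectors decreasingly.  For submodular f the
   greedy argument shows that the maximum defining the Lovasz extension is
   attained at any permutation sorting its argument, so on P_{pi,y} the hinge
   coincides with the affine function u |-> lov_sum f (1 - u .* y') s. *)

Lemma sorting_perm d (T : orderType d) n (g : 'I_n -> T) :
  exists s : {perm 'I_n}, forall i j : 'I_n, (i <= j)%N -> (g (s i) <= g (s j))%O.
Proof.
pose leg := [rel a b : 'I_n | (g a <= g b)%O].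
have leg_total : total leg by move=> a b; exact: le_total.
have leg_trans : transitive leg by move=> b a c; exact: le_trans.
pose t := sort_tuple leg (ord_tuple n).
have t_inj : injective (tnth t).
  by apply/tuple_uniqP; rewrite sort_uniq val_ord_tuple enum_uniq.
exists (perm t_inj) => i j le_ij; rewrite !permE (tnth_nth i) (tnth_nth i).
apply: (sorted_leq_nth leg_trans) => //; rewrite ?inE ?size_tuple //.
- by move=> a; exact: lexx.
- exact: (sort_sorted leg_total).
Qed.

Lemma telescope_sumr_ge (V : zmodType) (g : nat -> V) m n : (m <= n)%N ->
  \sum_(i < n | (m <= i)%N) (g i - g i.+1) = g m - g n.
Proof.
move=> le_mn; transitivity (\sum_(m <= i < n) (g i - g i.+1)).
  by rewrite big_geq_mkord.
under eq_bigr do rewrite -opprB.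
by rewrite sumrN telescope_sumr // opprB.
Qed.

Section Prefixes.
Variable k : nat.
Implicit Types (pi : {perm 'I_k}) (i : nat).

Lemma mem_prefix pi i (l : 'I_k) : (pi l \in Defs.prefix pi i) = (l < i)%N.
Proof. by rewrite mem_imset ?inE //; exact: perm_inj. Qed.

Lemma prefix0 pi : Defs.prefix pi 0 = set0.
Proof. by apply/setP => j; rewrite -(permKV pi j) mem_prefix inE. Qed.

Lemma prefix_full pi : Defs.prefix pi k = setT.
Proof. by apply/setP => j; rewrite -(permKV pi j) mem_prefix inE ltn_ord. Qed.

Lemma prefixS pi (l : 'I_k) : Defs.prefix pi l.+1 = pi l |: Defs.prefix pi l.
Proof.
apply/setP => j; rewrite -(permKV pi j) !inE !mem_prefix (inj_eq perm_inj).
by rewrite ltnS leq_eqVlt.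
Qed.

Lemma ind_perm (R : realFieldType) pi i (l : 'I_k) :
  ind R pi i (pi l) = if (l < i)%N then 1 else 0.
Proof. by rewrite /ind mem_prefix. Qed.

End Prefixes.

Section Greedy.
Variables (R : realFieldType) (k : nat) (f : {set 'I_k} -> R).
Implicit Types (pi s : {perm 'I_k}) (x : 'I_k -> R) (A : {set 'I_k}).

Definition marginal pi (i : nat) : R :=
  f (Defs.prefix pi i.+1) - f (Defs.prefix pi i).

Definition weight pi A : R := \sum_(i < k | pi i \in A) marginal pi i.

Lemma sum_marginal pi m :
  \sum_(i < m) marginal pi i = f (Defs.prefix pi m) - f set0.
Proof. by rewrite -(big_mkord xpredT) telescope_sumr // prefix0. Qed.

Lemma weight_prefix pi m : (m <= k)%N ->
  weight pi (Defs.prefix pi m) = f (Defs.prefix pi m) - f set0.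
Proof.
move=> le_mk; rewrite /weight.
under eq_bigl => i do rewrite mem_prefix.
by rewrite -big_ord_widen // sum_marginal.
Qed.

Lemma submodular_diminishing (B C : {set 'I_k}) a :
  submodular f -> B \subset C -> a \notin C ->
  f (a |: C) - f C <= f (a |: B) - f B.
Proof.
move=> f_sub sBC aC; have := f_sub (a |: B) C.
have -> : (a |: B) :|: C = a |: C by rewrite -setUA (setUidPr sBC).
have -> : (a |: B) :&: C = B.
  by rewrite setIUl (setIidPl sBC) (disjoint_setI0 _) ?set0U // disjoints1.
lra.
Qed.

Lemma weight_le pi A : submodular f -> weight pi A <= f A - f set0.
Proof.
move=> f_sub.
have -> : f A - f set0 = \sum_(i < k)
    (f (A :&: Defs.prefix pi i.+1) - f (A :&: Defs.prefix pi i)).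
  rewrite -(big_mkord xpredT (fun i => f (A :&: Defs.prefix pi i.+1) - f (A :&: Defs.prefix pi i))).
  by rewrite telescope_sumr // prefix_full prefix0 setIT setI0.
rewrite /weight big_mkcond /=; apply: ler_sum => i _; rewrite /marginal prefixS setIUr.
case: ifP => Ai.
- rewrite (setIidPr _) ?sub1set //.
  by apply: submodular_diminishing; rewrite ?subsetIr ?mem_prefix ?ltnn.
- by rewrite (disjoint_setI0 _) ?set0U ?subrr // disjoint_sym disjoints1 Ai.
Qed.

Definition along x s (n : nat) : R :=
  if insub n is Some i then x (s i) else 0.

Lemma along_ord x s (i : 'I_k) : along x s i = x (s i).
Proof. by rewrite /along valK. Qed.

Lemma along_ge x s n : (k <= n)%N -> along x s n = 0.
Proof. by move=> le_kn; rewrite /along insubF // ltnNge le_kn. Qed.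

Lemma along_telescope x s (j : 'I_k) :
  x j = \sum_(m < k | j \in Defs.prefix s m.+1) (along x s m - along x s m.+1).
Proof.
rewrite -(permKV s j); under eq_bigl => m do rewrite mem_prefix ltnS.
by rewrite telescope_sumr_ge 1?ltnW // (along_ge x s (leqnn k)) subr0 along_ord.
Qed.

Lemma lov_sum_abel x s pi : lov_sum f x pi =
  \sum_(m < k) (along x s m - along x s m.+1) * weight pi (Defs.prefix s m.+1).
Proof.
rewrite /lov_sum.
under eq_bigr => i _ do rewrite (along_telescope x s (pi i)) big_mkcond mulr_suml /=.
rewrite exchange_big; apply: eq_bigr => m _.
rewrite /weight mulr_sumr [RHS]big_mkcond; apply: eq_bigr => i _.
by case: ifP => _; rewrite ?mul0r ?mulr0 // mulrC.
Qed.

Lemma along_antitone x s n : (forall j, 0 <= x j) ->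
    (forall i j : 'I_k, (i <= j)%N -> x (s j) <= x (s i)) ->
  along x s n.+1 <= along x s n.
Proof.
move=> x_ge0 x_sorted; case: (ltnP n.+1 k) => [lt_n1k | le_kn1].
  rewrite (along_ord x s (Ordinal lt_n1k)) (along_ord x s (Ordinal (ltnW lt_n1k))).
  exact: x_sorted.
rewrite along_ge //; case: (ltnP n k) => [lt_nk | ?]; last by rewrite along_ge.
by rewrite (along_ord x s (Ordinal lt_nk)).
Qed.

Section Sorted.
Variables (x : 'I_k -> R) (s : {perm 'I_k}).
Hypotheses (f_sub : submodular f) (x_ge0 : forall j, 0 <= x j)
  (x_sorted : forall i j : 'I_k, (i <= j)%N -> x (s j) <= x (s i)).

(* Abel summation along s: the coefficients along x s m - along x s m.+1 are
   nonnegative, and by submodularity the weight of an s-prefix is largest for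
   pi = s. *)
Lemma lov_sum_le_sorted pi : lov_sum f x pi <= lov_sum f x s.
Proof.
rewrite !(lov_sum_abel x s); apply: ler_sum => m _; apply: ler_wpM2l.
  by rewrite subr_ge0 along_antitone.
by rewrite weight_prefix // weight_le.
Qed.

Lemma lovasz_sorted : lovasz f x = lov_sum f x s.
Proof.
apply/le_anti/andP; split; last exact: le_bigmax.
by apply: bigmax_le => [|pi _]; exact: lov_sum_le_sorted.
Qed.

End Sorted.
End Greedy.

Section PrefixCombinations.
Variables (R : realFieldType) (k : nat).
Implicit Types (pi s : {perm 'I_k}) (lam : 'I_k.+1 -> R) (y u : 'I_k -> R).

Definition convex_weights n (lam : 'I_n -> R) :=
  (forall i, 0 <= lam i) /\ \sum_(i < n) lam i = 1.

Definition prefix_comb lam pi (j : 'I_k) : R := \sum_(i < k.+1) lam i * ind R pi i j.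

Lemma PpyE pi y u : Ppy pi y u <->
  exists2 lam, convex_weights lam & forall j, u j = prefix_comb lam pi j * y j.
Proof.
rewrite /prefix_comb; split.
  case=> lam [lam_ge0 [lam_sum1 u_eq]]; exists lam => // j.
  by rewrite u_eq mulr_suml; apply: eq_bigr => i _; rewrite mulrA.
case=> lam [lam_ge0 lam_sum1] u_eq; exists lam; split=> //; split=> // j.
by rewrite u_eq mulr_suml; apply: eq_bigr => i _; rewrite mulrA.
Qed.

Section Convex.
Variables (lam : 'I_k.+1 -> R) (pi : {perm 'I_k}).
Hypothesis lam_convex : convex_weights lam.

Lemma prefix_comb_ge0 j : 0 <= prefix_comb lam pi j.
Proof.
case: lam_convex => lam_ge0 _; apply: sumr_ge0 => i _.
by rewrite /ind; case: ifP; rewrite ?mulr1 ?mulr0.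
Qed.

Lemma prefix_comb_le1 j : prefix_comb lam pi j <= 1.
Proof.
case: lam_convex => lam_ge0 <-; apply: ler_sum => i _.
by rewrite /ind; case: ifP; rewrite ?mulr1 ?mulr0.
Qed.

Lemma prefix_comb_antitone (a b : 'I_k) : (a <= b)%N ->
  prefix_comb lam pi (pi b) <= prefix_comb lam pi (pi a).
Proof.
case: lam_convex => lam_ge0 _ le_ab; apply: ler_sum => i _; rewrite !ind_perm.
case: ifP => [lt_bi|_]; first by rewrite (leq_ltn_trans le_ab lt_bi).
by case: ifP; rewrite ?mulr1 ?mulr0.
Qed.

End Convex.

Lemma sorted_prefix_comb (a : 'I_k -> R) s : (forall j, 0 <= a j <= 1) ->
    (forall i j : 'I_k, (i <= j)%N -> a (s j) <= a (s i)) ->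
  exists2 lam, convex_weights lam & forall j, a j = prefix_comb lam s j.
Proof.
move=> a01 a_sorted.
have a_ge0 j : 0 <= a j by case/andP: (a01 j).
pose c n := if n is n'.+1 then along a s n' else 1.
exists (fun i : 'I_k.+1 => c i - c i.+1); first split.
- case=> [[|n] ?]; rewrite subr_ge0 /=; last exact: along_antitone.
  case: (ltnP 0 k) => [k_gt0|?]; last by rewrite along_ge.
  by rewrite (along_ord a s (Ordinal k_gt0)); case/andP: (a01 (s (Ordinal k_gt0))).
- have := telescope_sumr_ge c (leq0n k.+1).
  by rewrite /= (along_ge a s (leqnn k)) subr0 => <-; apply: eq_bigl.
- move=> j; rewrite -(permKV s j) /prefix_comb.
  under eq_bigr => i _ do
    rewrite ind_perm (fun_if (fun v => (c i - c i.+1) * v)) mulr1 mulr0.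
  rewrite -big_mkcond telescope_sumr_ge; last by rewrite ltnS ltnW.
  by rewrite /= (along_ge a s (leqnn k)) subr0 along_ord.
Qed.
End PrefixCombinations.

Section Signs.
Variables (R : realFieldType) (k : nat).
Implicit Types (y : 'I_k -> R) (pi : {perm 'I_k}).

Lemma is_signM y y' : is_sign y -> is_sign y' -> is_sign (fun j => y j * y' j).
Proof.
move=> y_sign y'_sign j.
by case: (y_sign j) (y'_sign j) => -> [] ->; rewrite ?mulr1 ?mulrN1 ?opprK; auto.
Qed.

Lemma sign_sorting_perm pi (sg : 'I_k -> R) : is_sign sg ->
  exists s : {perm 'I_k}, forall t : 'I_k -> R, (forall j, 0 <= t j) ->
    (forall a b : 'I_k, (a <= b)%N -> t (pi b) <= t (pi a)) ->
  forall i j : 'I_k, (i <= j)%N -> t (s i) * sg (s i) <= t (s j) * sg (s j).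
Proof.
move=> sg_sign.
pose rk (j : 'I_k) : nat := (pi^-1)%g j.
(* First the coordinates with sg = -1 in pi-order, then those with sg = 1 in
   reverse pi-order. *)
pose key j := if sg j < 0 then rk j else (k + (k - rk j))%N.
have [s key_sorted] := sorting_perm key.
exists s => t t_ge0 t_anti i j le_ij.
have t_rank a b : (rk a <= rk b)%N -> t b <= t a.
  by move=> ?; rewrite -(permKV pi a) -(permKV pi b); exact: t_anti.
have rk_lt a : (rk a < k)%N by exact: ltn_ord.
have := key_sorted i j le_ij; rewrite leEnat /key.
have := rk_lt (s i); have := rk_lt (s j); have := t_ge0 (s i); have := t_ge0 (s j).
case: (sg_sign (s i)) => ->; case: (sg_sign (s j)) => ->;
  rewrite ?ltr10 ?ltrN10 /= ?mulr1 ?mulrN1 => tj_ge0 ti_ge0 rkj_lt rki_lt le_key.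
- by have /t_rank : (rk (s j) <= rk (s i))%N by lia.
- lia.
- lra.
- have /t_rank : (rk (s i) <= rk (s j))%N by lia.
  by rewrite lerN2.
Qed.
End Signs.

Section LovaszHinge.
Variables (R : realFieldType) (k : nat).
Implicit Types (y u : 'I_k -> R) (pi : {perm 'I_k}).

Lemma Ppy_sub_cube pi y u : is_sign y -> Ppy pi y u -> forall j, -1 <= u j <= 1.
Proof.
move=> y_sign /PpyE[lam lam_convex u_eq] j.
have := prefix_comb_ge0 pi lam_convex j; have := prefix_comb_le1 pi lam_convex j.
rewrite u_eq; case: (y_sign j) => -> t_le1 t_ge0; apply/andP; split; lra.
Qed.

Lemma cube_sub_Ppy u : (forall j, -1 <= u j <= 1) ->
  exists y pi, is_sign y /\ Ppy pi y u.
Proof.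
move=> u_cube.
pose y j : R := if 0 <= u j then 1 else -1.
have y_sq j : y j * y j = 1 by rewrite /y; case: ifP; rewrite ?mulr1 ?mulrNN ?mulr1.
pose a j := u j * y j.
have a01 j : 0 <= a j <= 1.
  have /andP[? ?] := u_cube j.
  by rewrite /a /y; case: ifP => ?; rewrite ?mulr1 ?mulrN1; apply/andP; split; lra.
have [s a_sorted] := sorting_perm (fun j => - a j).
have a_anti (i j : 'I_k) : (i <= j)%N -> a (s j) <= a (s i).
  by move=> /a_sorted; rewrite lerN2.
have [lam lam_convex a_eq] := sorted_prefix_comb a01 a_anti.
exists y, s; split; first by move=> j; rewrite /y; case: ifP; [left | right].
by apply/PpyE; exists lam => // j; rewrite -a_eq /a -mulrA y_sq mulr1.
Qed.

Lemma lhinge_affine_on_Ppy (f : {set 'I_k} -> R) pi y y' :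
    submodular f -> is_sign y -> is_sign y' ->
  affine_on (fun u => lhinge f u y') (Ppy pi y).
Proof.
move=> f_sub y_sign y'_sign.
pose sg j := y j * y' j.
have sg_sign : is_sign sg := is_signM y_sign y'_sign.
have [s s_sorts] := sign_sorting_perm pi sg_sign.
exists (fun j => - y' j * marginal f s ((s^-1)%g j)), (\sum_(i < k) marginal f s i).
move=> u /PpyE[lam lam_convex u_eq].
pose t := prefix_comb lam pi.
have t_ge0 j : 0 <= t j := prefix_comb_ge0 pi lam_convex j.
have t_le1 j : t j <= 1 := prefix_comb_le1 pi lam_convex j.
have uy'_eq j : u j * y' j = t j * sg j by rewrite u_eq -mulrA.
have hinge_eq j : Num.max 0 (1 - u j * y' j) = 1 - u j * y' j.
  rewrite max_r // uy'_eq subr_ge0.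
  by have := t_ge0 j; have := t_le1 j; case: (sg_sign j) => ->; lra.
rewrite /lhinge (lovasz_sorted (s := s)) //.
- rewrite /lov_sum [X in _ = X + _](reindex_inj (@perm_inj _ s)) -big_split /=.
  by apply: eq_bigr => i _; rewrite hinge_eq permK /marginal; ring.
- by move=> j; rewrite le_max lexx.
- move=> i j le_ij; rewrite !hinge_eq !uy'_eq lerD2l lerN2.
  exact: s_sorts t_ge0 (prefix_comb_antitone pi lam_convex) i j le_ij.
Qed.
End LovaszHinge.

Theorem lemma3 (R : realFieldType) (k : nat) :
  (forall u : 'I_k -> R,
     (forall j, -1 <= u j <= 1) <->
     exists (y : 'I_k -> R) (pi : {perm 'I_k}), is_sign y /\ Ppy pi y u)
  /\
  (forall (f : {set 'I_k} -> R) (y y' : 'I_k -> R) (pi : {perm 'I_k}),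
     in_Fk f -> is_sign y -> is_sign y' ->
     affine_on (fun u => lhinge f u y') (Ppy pi y)).
Proof.
split=> [u | f y y' pi [f_sub _ _]]; last exact: lhinge_affine_on_Ppy.
split; first exact: cube_sub_Ppy.
by case=> y [pi [y_sign u_in]]; exact: Ppy_sub_cube u_in.
Qed.
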